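(* Let $\sigma,\nu\in\mathbb R$ and $V:\mathbb R\to\mathbb R$ smooth. Let $M,K$ be the $6\times6$ matrices $$M=\begin{pmatrix}0&\frac\sigma2&-\frac12&0&0&0\\-\frac\sigma2&0&0&0&0&0\\\frac12&0&0&0&0&0\\0&0&0&0&0&0\\0&0&0&0&0&0\\0&0&0&0&0&0\end{pmatrix},\quad K=\begin{pmatrix}0&0&0&0&\frac\sigma2&\nu\\0&0&0&0&0&0\\0&0&0&-1&0&0\\0&0&1&0&0&0\\-\frac\sigma2&0&0&0&0&0\\-\nu&0&0&0&0&0\end{pmatrix},$$ and $S(\mathbf z)=uw-V(u)-\frac\nu2v^2-\frac\sigma2\theta\rho$ for $\mathbf z=(u,\theta,\phi,w,\rho,v)^T$. Let $\mathbf z_h=(u_h,\theta_h,\phi_h,w_h,\rho_h,v_h)^T$ be continuously differentiable in $t$ with values in $(V_h)^6$ and satisfy the DG scheme with central fluxes: for every $j$ and every $\boldsymbol\varphi\in(V_h)^6$, $$\int_{I_j}M\partial_t\mathbf z_h\cdot\boldsymbol\varphi\,dx-\int_{I_j}K\mathbf z_h\cdot\partial_x\boldsymbol\varphi\,dx+\big(K\{\mathbf z_h\}\cdot\boldsymbol\varphi^-\big)_{j+\frac12}-\big(K\{\mathbf z_h\}\cdot\boldsymbol\varphi^+\big)_{j-\frac12}=\int_{I_j}\nabla_{\mathbf z}S(\mathbf z_h)\cdot\boldsymbol\varphi\,dx.$$ Then the discrete energy $\mathcal E_h=\int_\Omega\big(-V(u_h)+\frac\nu2v_h^2\big)dx$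 is constant in time.
   Context: This is a DG discretization of the BBM–KdV equation $u_t-\sigma u_{xxt}=V'(u)_x+\nu u_{xxx}$ in the multi-symplectic form $M\mathbf z_t+K\mathbf z_x=\nabla_{\mathbf z}S(\mathbf z)$ above. Mesh and spaces: a one-dimensional domain $\Omega$ is partitioned into cells $I_j=[x_{j-1/2},x_{j+1/2}]$, $j=1,\dots,N$, with periodic boundary conditions (interface indices modulo $N$). For fixed $k\ge0$, $V_h=\{v\in L^2(\Omega): v|_{I_j}\text{ is a polynomial of degree}\le k\ \forall j\}$. For vector functions in $(V_h)^6$, superscripts $\pm$ at $x_{j+1/2}$ denote right/left limits and $\{\mathbf v\}=\frac12(\mathbf v^++\mathbf v^-)$; subscript $j\pm\frac12$ denotes evaluation at $x_{j\pm1/2}$. *)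

From Stdlib Require Import Reals Lra Arith.
From Coquelicot Require Import Coquelicot.
Open Scope R_scope.

(* Vectors in R^6 are functions nat -> R, components 0..5 =
   (u, theta, phi, w, rho, v). *)
Definition vec := nat -> R.

Definition sum6 (f : nat -> R) : R :=
  f 0%nat + f 1%nat + f 2%nat + f 3%nat + f 4%nat + f 5%nat.

Definition dot6 (a b : vec) : R := sum6 (fun i => a i * b i).

Definition matvec (A : nat -> nat -> R) (z : vec) : vec :=
  fun i => sum6 (fun l => A i l * z l).

Definition Mmat (sigma : R) : nat -> nat -> R := fun i l =>
  match i, l with
  | O, 1%nat => sigma / 2
  | O, 2%nat => - (1 / 2)
  | 1%nat, O => - (sigma / 2)
  | 2%nat, O => 1 / 2
  | _, _ => 0
  end.

Definition Kmat (sigma nu : R) : nat -> nat -> R := fun i l =>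
  match i, l with
  | O, 4%nat => sigma / 2
  | O, 5%nat => nu
  | 2%nat, 3%nat => -1
  | 3%nat, 2%nat => 1
  | 4%nat, O => - (sigma / 2)
  | 5%nat, O => - nu
  | _, _ => 0
  end.

Definition S_fun (V : R -> R) (sigma nu : R) (z : vec) : R :=
  z 0%nat * z 3%nat - V (z 0%nat) - nu / 2 * (z 5%nat) ^ 2
  - sigma / 2 * z 1%nat * z 4%nat.

Definition upd (z : vec) (i : nat) (s : R) : vec :=
  fun l => if Nat.eqb l i then s else z l.

Definition gradS (V : R -> R) (sigma nu : R) (z : vec) : vec :=
  fun i => Derive (fun s => S_fun V sigma nu (upd z i s)) (z i).

(* Piecewise polynomials: coefficient families
   c : component -> cell -> power -> R ; on cell j, component i is the
   polynomial x |-> sum_{m=0}^k c i j m * x^m. *)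
Definition coefs := nat -> nat -> nat -> R.

Definition peval (k : nat) (a : nat -> R) (x : R) : R :=
  sum_f_R0 (fun m => a m * x ^ m) k.

Definition cellval (k : nat) (c : coefs) (j : nat) (x : R) : vec :=
  fun i => peval k (c i j) x.

Definition nextc (N j : nat) : nat := ((j + 1) mod N)%nat.
Definition prevc (N j : nat) : nat := ((j + N - 1) mod N)%nat.

(* Cell j (0-indexed, j < N) is [xs j, xs (j+1)]; interfaces are xs 0 .. xs N,
   with xs N identified with xs 0 (periodicity).
   Traces at the right endpoint of cell j: minus = from cell j, plus = from
   cell (j+1) mod N at its left endpoint. *)
Definition avg_right (k N : nat) (xs : nat -> R) (c : coefs) (j : nat) : vec :=
  fun i => (cellval k c (nextc N j) (xs (nextc N j)) i
            + cellval k c j (xs (S j)) i) / 2.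

(* Traces at the left endpoint of cell j: plus = from cell j, minus = from
   cell (j-1) mod N at its right endpoint. *)
Definition avg_left (k N : nat) (xs : nat -> R) (c : coefs) (j : nat) : vec :=
  fun i => (cellval k c j (xs j) i
            + cellval k c (prevc N j) (xs (S (prevc N j))) i) / 2.

Definition dtz (k : nat) (zc : R -> coefs) (j : nat) (t x : R) : vec :=
  fun i => Derive (fun s => peval k (zc s i j) x) t.

Definition dxphi (k : nat) (phi : coefs) (j : nat) (x : R) : vec :=
  fun i => Derive (fun y => peval k (phi i j) y) x.

Definition scheme_eq (k N : nat) (xs : nat -> R) (sigma nu : R) (V : R -> R)
    (zc : R -> coefs) (t : R) (phi : coefs) (j : nat) : Prop :=
  RInt (fun x => dot6 (matvec (Mmat sigma) (dtz k zc j t x)) (cellval k phi j x))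
       (xs j) (xs (S j))
  - RInt (fun x => dot6 (matvec (Kmat sigma nu) (cellval k (zc t) j x))
                        (dxphi k phi j x))
       (xs j) (xs (S j))
  + dot6 (matvec (Kmat sigma nu) (avg_right k N xs (zc t) j))
         (cellval k phi j (xs (S j)))
  - dot6 (matvec (Kmat sigma nu) (avg_left k N xs (zc t) j))
         (cellval k phi j (xs j))
  = RInt (fun x => dot6 (gradS V sigma nu (cellval k (zc t) j x))
                        (cellval k phi j x))
       (xs j) (xs (S j)).

Definition energy (k N : nat) (xs : nat -> R) (nu : R) (V : R -> R)
    (zc : R -> coefs) (t : R) : R :=
  sum_f_R0 (fun j =>
    RInt (fun x => - V (peval k (zc t 0%nat j) x)
                   + nu / 2 * (peval k (zc t 5%nat j) x) ^ 2)
         (xs j) (xs (S j))) (N - 1).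

(** Write (a, q)_j for the L2 product on cell I_j and B_j(a, q) for the
   central-flux discretisation of (d/dx a, q) on I_j ([dg_form]).  Testing the
   scheme with a test function supported in one slot splits it into six scalar
   equations, one per row of M, K and grad S.  The rows of w, rho and v contain no
   time derivative: they say B(phi, .) = (u, .), (sigma/2) B(u, .) = (sigma/2) (theta, .)
   and nu B(u, .) = nu (v, .) for all time, so they may be differentiated in t.
   Testing the rows of u, theta, phi with u_t, theta_t, phi_t and the differentiated
   rows of w, rho, v with w, rho, v gives, on every cell,
     d/dt of the cell energy = sigma/2 [B(rho,u_t) + B(u_t,rho)]
                             + nu [B(v,u_t) + B(u_t,v)] - [B(w,phi_t) + B(phi_t,w)].
   Integrating by parts on each cell, B(a,b) + B(b,a) is a difference of
   interface terms whose central averages cancel between neighbouring cells, so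
   its sum over the periodic mesh vanishes, and so does dE_h/dt. *)

From Stdlib Require Import Reals Lra Lia.
From Coquelicot Require Import Coquelicot.
Open Scope R_scope.

(** * Calculus on R *)

(* Coquelicot states these for normed modules; the instances at R let [apply]
   match [Rplus], [Rmult], ... without unfolding the module operations. *)

Lemma is_derive_plus_R (f g : R -> R) t df dg :
  is_derive f t df -> is_derive g t dg -> is_derive (fun s => f s + g s) t (df + dg).
Proof. apply (is_derive_plus f g). Qed.

Lemma is_derive_minus_R (f g : R -> R) t df dg :
  is_derive f t df -> is_derive g t dg -> is_derive (fun s => f s - g s) t (df - dg).
Proof. apply (is_derive_minus f g). Qed.

Lemma is_derive_opp_R (f : R -> R) t df :
  is_derive f t df -> is_derive (fun s => - f s) t (- df).
Proof. apply (is_derive_opp f). Qed.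

Lemma is_derive_comp_R (f g : R -> R) t df dg :
  is_derive f (g t) df -> is_derive g t dg -> is_derive (fun s => f (g s)) t (df * dg).
Proof.
  intros Hf Hg. rewrite Rmult_comm. apply (is_derive_comp f g); assumption.
Qed.

Lemma is_derive_mult_const_r (f : R -> R) t df c :
  is_derive f t df -> is_derive (fun s => f s * c) t (df * c).
Proof.
  intros Hf. apply (is_derive_ext (fun s => c * f s)); [intros; apply Rmult_comm |].
  rewrite Rmult_comm. now apply is_derive_scal.
Qed.

Lemma is_derive_sum_f_R0 (F : nat -> R -> R) (D : nat -> R) n t :
  (forall m, (m <= n)%nat -> is_derive (F m) t (D m)) ->
  is_derive (fun s => sum_f_R0 (fun m => F m s) n) t (sum_f_R0 D n).
Proof.
  induction n as [|n IH]; intros HF; simpl.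
  - now apply HF.
  - apply is_derive_plus_R; auto.
Qed.

Lemma ex_derive_continuous_R (f : R -> R) x : ex_derive f x -> continuous f x.
Proof. apply (ex_derive_continuous (K := R_AbsRing) (V := R_NormedModule)). Qed.

Lemma continuous_mult_R (f g : R -> R) x :
  continuous f x -> continuous g x -> continuous (fun y => f y * g y) x.
Proof. apply (continuous_mult f g). Qed.

Lemma continuous_sum_f_R0 (F : nat -> R -> R) n x :
  (forall m, (m <= n)%nat -> continuous (F m) x) ->
  continuous (fun y => sum_f_R0 (fun m => F m y) n) x.
Proof.
  induction n as [|n IH]; intros HF; simpl.
  - now apply HF.
  - apply (continuous_plus (fun y => sum_f_R0 (fun m => F m y) n) (F (S n))); auto.
Qed.

Lemma is_derive_eq_on (f g : R -> R) T0 T1 t df dg :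
  (forall s, T0 < s < T1 -> f s = g s) -> T0 < t < T1 ->
  is_derive f t df -> is_derive g t dg -> df = dg.
Proof.
  intros Hfg Ht Hf Hg.
  assert (Hg' : is_derive g t df).
  { apply (is_derive_ext_loc f); auto.
    apply (locally_open (fun s => T0 < s < T1)); auto.
    apply open_and; [apply open_gt | apply open_lt]. }
  rewrite <- (is_derive_unique g t df Hg'). now apply is_derive_unique.
Qed.

Lemma eq_of_is_derive_zero (f : R -> R) T0 T1 t1 t2 :
  (forall t, T0 < t < T1 -> is_derive f t 0) ->
  T0 < t1 < T1 -> T0 < t2 < T1 -> f t1 = f t2.
Proof.
  intros Hf Ht1 Ht2.
  destruct (Rtotal_order t1 t2) as [H | [-> | H]]; [| reflexivity | symmetry];
    apply eq_is_derive; auto; intros; apply Hf; lra.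
Qed.

Lemma ex_RInt_cont (f : R -> R) a b : (forall x, continuous f x) -> ex_RInt f a b.
Proof. intros Hf. apply (ex_RInt_continuous (V := R_CompleteNormedModule)); auto. Qed.

Lemma RInt_ext_R (f g : R -> R) a b : (forall x, f x = g x) -> RInt f a b = RInt g a b.
Proof. intros H; apply RInt_ext; intros; apply H. Qed.

Lemma RInt_plus_cont (f g : R -> R) a b :
  (forall x, continuous f x) -> (forall x, continuous g x) ->
  RInt (fun x => f x + g x) a b = RInt f a b + RInt g a b.
Proof. intros; apply (RInt_plus f g); now apply ex_RInt_cont. Qed.

Lemma RInt_minus_cont (f g : R -> R) a b :
  (forall x, continuous f x) -> (forall x, continuous g x) ->
  RInt (fun x => f x - g x) a b = RInt f a b - RInt g a b.
Proof. intros; apply (RInt_minus f g); now apply ex_RInt_cont. Qed.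

Lemma RInt_scal_cont (f : R -> R) a b c : (forall x, continuous f x) ->
  RInt (fun x => c * f x) a b = c * RInt f a b.
Proof. intros; apply (RInt_scal f); now apply ex_RInt_cont. Qed.

Lemma RInt_lincomb6 (A : nat -> R) (F : nat -> R -> R) a b :
  (forall l x, continuous (F l) x) ->
  RInt (fun x => sum6 (fun l => A l * F l x)) a b = sum6 (fun l => A l * RInt (F l) a b).
Proof.
  intros HF. apply is_RInt_unique. unfold sum6.
  assert (HI : forall l, is_RInt (fun x => A l * F l x) a b (A l * RInt (F l) a b)).
  { intros l. apply (is_RInt_scal (F l)), (RInt_correct (V := R_CompleteNormedModule)).
    now apply ex_RInt_cont. }
  do 5 (apply (is_RInt_plus (V := R_NormedModule)); [| apply HI]); apply HI.
Qed.

Lemma RInt_by_parts (f g : R -> R) a b :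
  (forall x, ex_derive f x /\ continuous (Derive f) x) ->
  (forall x, ex_derive g x /\ continuous (Derive g) x) ->
  RInt (fun x => f x * Derive g x) a b + RInt (fun x => g x * Derive f x) a b
  = f b * g b - f a * g a.
Proof.
  intros Hf Hg.
  assert (Cf : forall x, continuous f x) by (intros; apply ex_derive_continuous_R, Hf).
  assert (Cg : forall x, continuous g x) by (intros; apply ex_derive_continuous_R, Hg).
  assert (Dfg : forall x, Derive (fun y => f y * g y) x = g x * Derive f x + f x * Derive g x).
  { intros x. rewrite Derive_mult by (apply Hf || apply Hg). ring. }
  rewrite <- (RInt_plus_cont (fun x => f x * Derive g x) (fun x => g x * Derive f x)).
  2: intros x; apply continuous_mult_R; [apply Cf | apply Hg].
  2: intros x; apply continuous_mult_R; [apply Cg | apply Hf].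
  rewrite (RInt_ext_R _ (Derive (fun y => f y * g y))) by (intros; rewrite Dfg; ring).
  rewrite RInt_Derive; [reflexivity | intros x _ ..].
  - apply ex_derive_mult; [apply Hf | apply Hg].
  - apply (continuous_ext (fun y => g y * Derive f y + f y * Derive g y));
      [intros; now rewrite Dfg |].
    apply (continuous_plus (fun y => g y * Derive f y) (fun y => f y * Derive g y));
      apply continuous_mult_R; [apply Cg | apply Hf | apply Cf | apply Hg].
Qed.

Lemma is_derive_RInt_param_cont (f g : R -> R -> R) a b T0 T1 t :
  T0 < t < T1 ->
  (forall s x, T0 < s < T1 -> is_derive (fun u => f u x) s (g s x)) ->
  (forall x, continuity_2d_pt g t x) ->
  (forall s x, continuous (f s) x) ->
  is_derive (fun s => RInt (f s) a b) t (RInt (g t) a b).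
Proof.
  intros Ht Hd Hg Hf.
  rewrite (RInt_ext_R (g t) (fun x => Derive (fun u => f u x) t))
    by (intros; symmetry; apply is_derive_unique, Hd, Ht).
  apply (is_derive_RInt_param f).
  - apply (locally_open (fun s => T0 < s < T1)); [| | exact Ht].
    + apply open_and; [apply open_gt | apply open_lt].
    + intros s Hs x _. eexists. now apply Hd.
  - intros x _. apply (continuity_2d_pt_ext_loc g); [| apply Hg].
    assert (Hdelta : 0 < Rmin (t - T0) (T1 - t)) by (apply Rmin_pos; lra).
    exists (mkposreal _ Hdelta). intros u v Hu _. simpl in Hu.
    apply Rabs_lt_between in Hu.
    pose proof (Rmin_l (t - T0) (T1 - t)). pose proof (Rmin_r (t - T0) (T1 - t)).
    symmetry. apply is_derive_unique, Hd. lra.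
  - apply filter_forall. intros s. now apply ex_RInt_cont.
Qed.

(** * Polynomials with time-dependent coefficients *)

Definition dpeval (k : nat) (c : nat -> R) (x : R) : R :=
  sum_f_R0 (fun m => c m * INR m * x ^ pred m) k.

Lemma is_derive_peval k c x : is_derive (peval k c) x (dpeval k c x).
Proof.
  apply (is_derive_sum_f_R0 (fun m y => c m * y ^ m)); intros m _.
  replace (c m * INR m * x ^ pred m) with (c m * (INR m * 1 * x ^ pred m)) by ring.
  apply is_derive_scal, is_derive_pow, (is_derive_id (K := R_AbsRing)).
Qed.

Lemma Derive_peval k c x : Derive (peval k c) x = dpeval k c x.
Proof. apply is_derive_unique, is_derive_peval. Qed.

Lemma continuous_peval k c x : continuous (peval k c) x.
Proof.
  apply (continuous_sum_f_R0 (fun m y => c m * y ^ m)); intros m _.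
  apply ex_derive_continuous_R; auto_derive; auto.
Qed.

Lemma continuous_Derive_peval k c x : continuous (Derive (peval k c)) x.
Proof.
  apply (continuous_ext (dpeval k c)); [intros; now rewrite Derive_peval |].
  apply (continuous_sum_f_R0 (fun m y => c m * INR m * y ^ pred m)); intros m _.
  apply ex_derive_continuous_R; auto_derive; auto.
Qed.

Lemma is_derive_peval_coef k (C : R -> nat -> R) (D : nat -> R) t x :
  (forall m, (m <= k)%nat -> is_derive (fun s => C s m) t (D m)) ->
  is_derive (fun s => peval k (C s) x) t (peval k D x).
Proof.
  intros HC. apply (is_derive_sum_f_R0 (fun m s => C s m * x ^ m)); intros m Hm.
  now apply is_derive_mult_const_r, HC.
Qed.

Lemma RInt_peval_mult k c (g : R -> R) a b : (forall x, continuous g x) ->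
  RInt (fun x => peval k c x * g x) a b
  = sum_f_R0 (fun m => c m * RInt (fun x => x ^ m * g x) a b) k.
Proof.
  intros Hg.
  assert (Hm : forall m x, continuous (fun y => y ^ m * g y) x).
  { intros; apply continuous_mult_R; auto. apply ex_derive_continuous_R; auto_derive; auto. }
  induction k as [|k IH]; unfold peval in *; cbn [sum_f_R0].
  - rewrite <- RInt_scal_cont by auto. apply RInt_ext_R; intros; ring.
  - rewrite <- IH, <- RInt_scal_cont, <- RInt_plus_cont; auto.
    + apply RInt_ext_R; intros; ring.
    + intros; apply continuous_mult_R; auto. apply continuous_peval.
    + intros; apply continuous_mult_R; [apply continuous_const | auto].
Qed.

Lemma is_derive_RInt_peval_mult k (C : R -> nat -> R) (D : nat -> R) (g : R -> R) a b t :
  (forall x, continuous g x) ->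
  (forall m, (m <= k)%nat -> is_derive (fun s => C s m) t (D m)) ->
  is_derive (fun s => RInt (fun x => peval k (C s) x * g x) a b) t
            (RInt (fun x => peval k D x * g x) a b).
Proof.
  intros Hg HC. rewrite RInt_peval_mult by exact Hg.
  apply (is_derive_ext (fun s => sum_f_R0 (fun m => C s m * RInt (fun x => x ^ m * g x) a b) k)).
  { intros s. symmetry. now apply RInt_peval_mult. }
  apply (is_derive_sum_f_R0 (fun m s => C s m * RInt (fun x => x ^ m * g x) a b)); intros m Hm.
  now apply is_derive_mult_const_r, HC.
Qed.

Lemma continuity_2d_pt_peval k (C : R -> nat -> R) t x :
  (forall m, (m <= k)%nat -> continuity_pt (fun s => C s m) t) ->
  continuity_2d_pt (fun s y => peval k (C s) y) t x.
Proof.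
  intros HC.
  assert (Hm : forall m, (m <= k)%nat -> continuity_2d_pt (fun s y => C s m * y ^ m) t x).
  { intros m Hm.
    apply (continuity_2d_pt_mult (fun s _ => C s m) (fun _ y => y ^ m)).
    - apply (continuity_1d_2d_pt_comp (fun s => C s m) (fun s _ => s));
        [apply HC, Hm | apply continuity_2d_pt_id1].
    - apply (continuity_1d_2d_pt_comp (fun y => y ^ m) (fun _ y => y));
        [apply derivable_continuous_pt, derivable_pt_pow | apply continuity_2d_pt_id2]. }
  unfold peval. induction k as [|k IH]; cbn [sum_f_R0]; [now apply Hm |].
  apply (continuity_2d_pt_plus (fun s y => sum_f_R0 (fun m => C s m * y ^ m) k)
                               (fun s y => C s (S k) * y ^ S k)); auto.
Qed.

(** * The central-flux DG form on a periodic mesh *)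

Lemma nextc_lt N j : (0 < N)%nat -> (nextc N j < N)%nat.
Proof. intros; apply Nat.mod_upper_bound; lia. Qed.

Lemma prevc_lt N j : (0 < N)%nat -> (prevc N j < N)%nat.
Proof. intros; apply Nat.mod_upper_bound; lia. Qed.

Lemma prevc_0 n : prevc (S n) 0 = n.
Proof. unfold prevc. replace (0 + S n - 1)%nat with n by lia. apply Nat.mod_small; lia. Qed.

Lemma prevc_S n j : (S j < S n)%nat -> prevc (S n) (S j) = j.
Proof.
  intros. unfold prevc. replace (S j + S n - 1)%nat with (j + 1 * S n)%nat by lia.
  rewrite Nat.Div0.mod_add. apply Nat.mod_small; lia.
Qed.

Lemma nextc_prevc N j : (j < N)%nat -> nextc N (prevc N j) = j.
Proof.
  intros H. destruct N as [|n]; [lia |]. unfold nextc. destruct j as [|j].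
  - rewrite prevc_0. replace (n + 1)%nat with (1 * S n)%nat by lia. apply Nat.Div0.mod_mul.
  - rewrite prevc_S by lia. replace (j + 1)%nat with (S j) by lia. apply Nat.mod_small; lia.
Qed.

Lemma sum_prevc N (h : nat -> R) : (0 < N)%nat ->
  sum_f_R0 (fun j => h (prevc N j)) (N - 1) = sum_f_R0 h (N - 1).
Proof.
  intros HN. destruct N as [|n]; [lia |]. replace (S n - 1)%nat with n by lia.
  destruct n as [|n]; [cbn [sum_f_R0]; now rewrite prevc_0 |].
  rewrite decomp_sum, prevc_0 by lia. simpl pred.
  rewrite (sum_eq _ h n) by (intros; rewrite prevc_S by lia; reflexivity).
  simpl. ring.
Qed.

Section DGForm.

Variables (N : nat) (xs : nat -> R).

Definition cell_ip (a b : nat -> R -> R) (j : nat) : R :=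
  RInt (fun x => a j x * b j x) (xs j) (xs (S j)).

Definition flux_right (a : nat -> R -> R) (j : nat) : R :=
  (a (nextc N j) (xs (nextc N j)) + a j (xs (S j))) / 2.

Definition flux_left (a : nat -> R -> R) (j : nat) : R :=
  (a j (xs j) + a (prevc N j) (xs (S (prevc N j)))) / 2.

Definition dg_form (a q : nat -> R -> R) (j : nat) : R :=
  - RInt (fun x => a j x * Derive (q j) x) (xs j) (xs (S j))
  + flux_right a j * q j (xs (S j)) - flux_left a j * q j (xs j).

Lemma cell_ip_comm a b j : cell_ip a b j = cell_ip b a j.
Proof. apply RInt_ext_R; intros; apply Rmult_comm. Qed.

Definition C1_pieces (a : nat -> R -> R) : Prop :=
  forall j x, ex_derive (a j) x /\ continuous (Derive (a j)) x.

Lemma sum_dg_form_skew a b : (0 < N)%nat -> C1_pieces a -> C1_pieces b ->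
  sum_f_R0 (fun j => dg_form a b j + dg_form b a j) (N - 1) = 0.
Proof.
  intros HN Ha Hb.
  (* Cell j contributes H j - H (prevc N j), H j being the flux term at x_{j+1/2}. *)
  set (H j := (a (nextc N j) (xs (nextc N j)) * b j (xs (S j))
               + b (nextc N j) (xs (nextc N j)) * a j (xs (S j))) / 2).
  rewrite (sum_eq _ (fun j => H j - H (prevc N j))).
  - rewrite minus_sum, sum_prevc by exact HN. ring.
  - intros j Hj. unfold H. rewrite nextc_prevc by lia.
    pose proof (RInt_by_parts (a j) (b j) (xs j) (xs (S j)) (Ha j) (Hb j)).
    unfold dg_form, flux_right, flux_left. lra.
Qed.

End DGForm.

Definition pwpoly (k : nat) (c : nat -> nat -> R) : nat -> R -> R :=
  fun j x => peval k (c j) x.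

Lemma C1_pieces_pwpoly k c : C1_pieces (pwpoly k c).
Proof.
  intros j x. split.
  - eexists. apply is_derive_peval.
  - apply continuous_Derive_peval.
Qed.

Lemma continuous_matvec_cellval A k c i j x :
  continuous (fun y => matvec A (cellval k c j y) i) x.
Proof.
  (* [sum6 F] is convertible to [sum_f_R0 F 5]. *)
  apply (continuous_sum_f_R0 (fun l y => A i l * cellval k c j y l) 5); intros l _.
  apply continuous_mult_R; [apply continuous_const | apply continuous_peval].
Qed.

Section Linearity.

Variables (k N : nat) (xs : nat -> R) (A : nat -> nat -> R) (c : coefs) (q : nat -> nat -> R)
  (i j : nat).

Lemma cell_ip_matvec :
  cell_ip xs (fun n x => matvec A (cellval k c n x) i) (pwpoly k q) j
  = sum6 (fun l => A i l * cell_ip xs (pwpoly k (c l)) (pwpoly k q) j).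
Proof.
  unfold cell_ip.
  rewrite <- (RInt_lincomb6 (A i) (fun l x => pwpoly k (c l) j x * pwpoly k q j x))
    by (intros; apply continuous_mult_R; apply continuous_peval).
  apply RInt_ext_R; intros; unfold matvec, sum6, cellval, pwpoly; ring.
Qed.

Lemma dg_form_matvec :
  dg_form N xs (fun n x => matvec A (cellval k c n x) i) (pwpoly k q) j
  = sum6 (fun l => A i l * dg_form N xs (pwpoly k (c l)) (pwpoly k q) j).
Proof.
  unfold dg_form at 1.
  rewrite (RInt_ext_R _
    (fun x => sum6 (fun l => A i l * (pwpoly k (c l) j x * Derive (pwpoly k q j) x))))
    by (intros; unfold matvec, sum6, cellval, pwpoly; ring).
  rewrite RInt_lincomb6
    by (intros; apply continuous_mult_R; [apply continuous_peval | apply continuous_Derive_peval]).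
  unfold dg_form, flux_right, flux_left, matvec, sum6, cellval, pwpoly; field.
Qed.

End Linearity.

Section TimeDerivatives.

Variables (k N : nat) (xs : nat -> R) (C : R -> nat -> nat -> R) (D : nat -> nat -> R)
  (q : nat -> nat -> R) (j : nat) (t : R).

Lemma is_derive_cell_ip :
  (forall m, (m <= k)%nat -> is_derive (fun s => C s j m) t (D j m)) ->
  is_derive (fun s => cell_ip xs (pwpoly k (C s)) (pwpoly k q) j) t
    (cell_ip xs (pwpoly k D) (pwpoly k q) j).
Proof. intros HC. apply is_derive_RInt_peval_mult; [apply continuous_peval | exact HC]. Qed.

Lemma is_derive_dg_form : (0 < N)%nat -> (j < N)%nat ->
  (forall n m, (n < N)%nat -> (m <= k)%nat -> is_derive (fun s => C s n m) t (D n m)) ->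
  is_derive (fun s => dg_form N xs (pwpoly k (C s)) (pwpoly k q) j) t
    (dg_form N xs (pwpoly k D) (pwpoly k q) j).
Proof.
  intros HN Hj HC. unfold dg_form, flux_right, flux_left, Rdiv.
  assert (Hn : forall n x, (n < N)%nat ->
    is_derive (fun s => pwpoly k (C s) n x) t (pwpoly k D n x))
    by (intros; apply is_derive_peval_coef; auto).
  apply is_derive_minus_R; [apply is_derive_plus_R |].
  - apply is_derive_opp_R, is_derive_RInt_peval_mult; [apply continuous_Derive_peval | auto].
  - do 2 apply is_derive_mult_const_r.
    apply is_derive_plus_R; apply Hn; [apply nextc_lt |]; auto.
  - do 2 apply is_derive_mult_const_r.
    apply is_derive_plus_R; apply Hn; [| apply prevc_lt]; auto.
Qed.

End TimeDerivatives.

(** * The scheme, row by row *)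

Definition dcoef (zc : R -> coefs) (t : R) : coefs :=
  fun i j m => Derive (fun s => zc s i j m) t.

Definition slot_test (i : nat) (q : nat -> nat -> R) : coefs :=
  fun l => if Nat.eqb l i then q else fun _ _ => 0.

(* S z = z . (Smat z) / 2 - V (z 0). *)
Definition Smat (sigma nu : R) : nat -> nat -> R := fun i l =>
  match i, l with
  | O, 3%nat => 1
  | 1%nat, 4%nat => - (sigma / 2)
  | 3%nat, O => 1
  | 4%nat, 1%nat => - (sigma / 2)
  | 5%nat, 5%nat => - nu
  | _, _ => 0
  end.

Lemma gradS_decomp V sigma nu z i : (i < 6)%nat -> ex_derive V (z 0%nat) ->
  gradS V sigma nu z i
  = matvec (Smat sigma nu) z i - (if Nat.eqb i 0 then Derive V (z 0%nat) else 0).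
Proof.
  intros Hi HV. unfold gradS, S_fun, upd, matvec, sum6.
  destruct i as [|[|[|[|[|[|i]]]]]]; try lia; cbn [Nat.eqb Smat];
    apply is_derive_unique; auto_derive; auto; try change (fun x : R => V x) with V; field.
Qed.

Lemma dot6_slot_test a i q k j x : (i < 6)%nat ->
  dot6 a (cellval k (slot_test i q) j x) = a i * pwpoly k q j x.
Proof.
  intros Hi. unfold dot6, sum6, cellval, slot_test, pwpoly.
  assert (H0 : peval k (fun _ => 0) x = 0).
  { unfold peval. induction k as [|k IH]; simpl; [ring | rewrite IH; ring]. }
  destruct i as [|[|[|[|[|[|i]]]]]]; try lia; cbn [Nat.eqb]; rewrite ?H0; ring.
Qed.

Lemma dot6_dxphi_slot_test a i q k j x : (i < 6)%nat ->
  dot6 a (dxphi k (slot_test i q) j x) = a i * Derive (pwpoly k q j) x.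
Proof.
  intros Hi. unfold dot6, sum6, dxphi, slot_test, pwpoly.
  assert (H0 : Derive (fun y => peval k (fun _ => 0) y) x = 0).
  { rewrite Derive_peval. unfold dpeval. induction k as [|k IH]; simpl; [ring | rewrite IH; ring]. }
  destruct i as [|[|[|[|[|[|i]]]]]]; try lia; cbn [Nat.eqb]; rewrite ?H0; ring.
Qed.

Lemma dtz_dcoef k zc j t x l : (forall m, (m <= k)%nat -> ex_derive (fun s => zc s l j m) t) ->
  dtz k zc j t x l = pwpoly k (dcoef zc t l) j x.
Proof.
  intros Hd. apply is_derive_unique, is_derive_peval_coef.
  intros m Hm. now apply Derive_correct, Hd.
Qed.

Section Conservation.

Variables (sigma nu : R) (V : R -> R) (k N : nat) (xs : nat -> R) (T0 T1 : R) (zc : R -> coefs).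

Hypothesis HV : forall y, ex_derive V y.
Hypothesis HV' : forall y, continuous (Derive V) y.
Hypothesis HN : (0 < N)%nat.
Hypothesis Hzc : forall i j m, (i < 6)%nat -> (j < N)%nat -> (m <= k)%nat ->
  forall t, T0 < t < T1 ->
    ex_derive (fun s => zc s i j m) t /\ continuous (Derive (fun s => zc s i j m)) t.
Hypothesis Hscheme : forall t, T0 < t < T1 -> forall j, (j < N)%nat -> forall phi : coefs,
  scheme_eq k N xs sigma nu V zc t phi j.

Lemma is_derive_dcoef i j m t : (i < 6)%nat -> (j < N)%nat -> (m <= k)%nat -> T0 < t < T1 ->
  is_derive (fun s => zc s i j m) t (dcoef zc t i j m).
Proof. intros; apply Derive_correct, Hzc; auto. Qed.

Lemma RInt_gradS_slot t i q j : (i < 6)%nat ->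
  RInt (fun x => dot6 (gradS V sigma nu (cellval k (zc t) j x)) (cellval k (slot_test i q) j x))
    (xs j) (xs (S j))
  = cell_ip xs (fun n x => matvec (Smat sigma nu) (cellval k (zc t) n x) i) (pwpoly k q) j
    - (if Nat.eqb i 0
       then cell_ip xs (fun n x => Derive V (pwpoly k (zc t 0%nat) n x)) (pwpoly k q) j
       else 0).
Proof.
  intros Hi.
  destruct (Nat.eqb_spec i 0) as [-> | Hi0].
  - unfold cell_ip. rewrite <- RInt_minus_cont.
    + apply RInt_ext_R; intros x. rewrite dot6_slot_test, gradS_decomp by auto.
      cbn [Nat.eqb]. unfold cellval, pwpoly. ring.
    + intros; apply continuous_mult_R; [apply continuous_matvec_cellval | apply continuous_peval].
    + intros; apply continuous_mult_R; [| apply continuous_peval].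
      apply (continuous_comp (pwpoly k (zc t 0%nat) j)); [apply continuous_peval | apply HV'].
  - rewrite Rminus_0_r. apply RInt_ext_R; intros x.
    rewrite dot6_slot_test, gradS_decomp by auto. apply Nat.eqb_neq in Hi0. rewrite Hi0. ring.
Qed.

Lemma scheme_eq_slot t i q j : T0 < t < T1 -> (i < 6)%nat -> (j < N)%nat ->
  sum6 (fun l => Mmat sigma i l * cell_ip xs (pwpoly k (dcoef zc t l)) (pwpoly k q) j)
  + sum6 (fun l => Kmat sigma nu i l * dg_form N xs (pwpoly k (zc t l)) (pwpoly k q) j)
  = sum6 (fun l => Smat sigma nu i l * cell_ip xs (pwpoly k (zc t l)) (pwpoly k q) j)
    - (if Nat.eqb i 0
       then cell_ip xs (fun n x => Derive V (pwpoly k (zc t 0%nat) n x)) (pwpoly k q) j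
       else 0).
Proof.
  intros Ht Hi Hj. pose proof (Hscheme t Ht j Hj (slot_test i q)) as H. unfold scheme_eq in H.
  rewrite <- !cell_ip_matvec, <- dg_form_matvec.
  assert (EM : RInt (fun x => dot6 (matvec (Mmat sigma) (dtz k zc j t x))
                                   (cellval k (slot_test i q) j x)) (xs j) (xs (S j))
               = cell_ip xs (fun n x => matvec (Mmat sigma) (cellval k (dcoef zc t) n x) i)
                   (pwpoly k q) j).
  { apply RInt_ext_R; intros x. rewrite dot6_slot_test by exact Hi. unfold matvec, sum6.
    rewrite !dtz_dcoef by (intros; apply Hzc; auto; lia). reflexivity. }
  assert (EK : RInt (fun x => dot6 (matvec (Kmat sigma nu) (cellval k (zc t) j x))
                                   (dxphi k (slot_test i q) j x)) (xs j) (xs (S j))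
               = RInt (fun x => matvec (Kmat sigma nu) (cellval k (zc t) j x) i
                                * Derive (pwpoly k q j) x) (xs j) (xs (S j))).
  { apply RInt_ext_R; intros x. now rewrite dot6_dxphi_slot_test. }
  assert (FR : matvec (Kmat sigma nu) (avg_right k N xs (zc t) j) i
               = flux_right N xs (fun n x => matvec (Kmat sigma nu) (cellval k (zc t) n x) i) j)
    by (unfold matvec, sum6, avg_right, flux_right; field).
  assert (FL : matvec (Kmat sigma nu) (avg_left k N xs (zc t) j) i
               = flux_left N xs (fun n x => matvec (Kmat sigma nu) (cellval k (zc t) n x) i) j)
    by (unfold matvec, sum6, avg_left, flux_left; field).
  rewrite EM, EK, RInt_gradS_slot, !dot6_slot_test, FR, FL in H by exact Hi.
  unfold dg_form. cbv beta. lra.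
Qed.

Lemma scheme_u_dx_phi s q j : T0 < s < T1 -> (j < N)%nat ->
  dg_form N xs (pwpoly k (zc s 2%nat)) (pwpoly k q) j
  = cell_ip xs (pwpoly k (zc s 0%nat)) (pwpoly k q) j.
Proof.
  intros Hs Hj. pose proof (scheme_eq_slot s 3 q j Hs ltac:(lia) Hj) as E.
  unfold sum6 in E. cbn [Mmat Kmat Smat Nat.eqb] in E. lra.
Qed.

Lemma scheme_theta_dx_u s q j : T0 < s < T1 -> (j < N)%nat ->
  sigma / 2 * dg_form N xs (pwpoly k (zc s 0%nat)) (pwpoly k q) j
  = sigma / 2 * cell_ip xs (pwpoly k (zc s 1%nat)) (pwpoly k q) j.
Proof.
  intros Hs Hj. pose proof (scheme_eq_slot s 4 q j Hs ltac:(lia) Hj) as E.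
  unfold sum6 in E. cbn [Mmat Kmat Smat Nat.eqb] in E. lra.
Qed.

Lemma scheme_v_dx_u s q j : T0 < s < T1 -> (j < N)%nat ->
  nu * dg_form N xs (pwpoly k (zc s 0%nat)) (pwpoly k q) j
  = nu * cell_ip xs (pwpoly k (zc s 5%nat)) (pwpoly k q) j.
Proof.
  intros Hs Hj. pose proof (scheme_eq_slot s 5 q j Hs ltac:(lia) Hj) as E.
  unfold sum6 in E. cbn [Mmat Kmat Smat Nat.eqb] in E. lra.
Qed.

Lemma dg_relation_dt c i l q j t : T0 < t < T1 -> (j < N)%nat -> (i < 6)%nat -> (l < 6)%nat ->
  (forall s, T0 < s < T1 ->
     c * dg_form N xs (pwpoly k (zc s i)) (pwpoly k q) j
     = c * cell_ip xs (pwpoly k (zc s l)) (pwpoly k q) j) ->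
  c * dg_form N xs (pwpoly k (dcoef zc t i)) (pwpoly k q) j
  = c * cell_ip xs (pwpoly k (dcoef zc t l)) (pwpoly k q) j.
Proof.
  intros Ht Hj Hi Hl Hrel. apply (is_derive_eq_on _ _ T0 T1 t _ _ Hrel Ht);
    apply is_derive_scal; [apply is_derive_dg_form | apply is_derive_cell_ip]; auto;
    intros; apply is_derive_dcoef; auto.
Qed.

(** * Energy *)

Lemma energy_rate_cell t j : T0 < t < T1 -> (j < N)%nat ->
  let u := pwpoly k (zc t 0%nat) in let w := pwpoly k (zc t 3%nat) in
  let rho := pwpoly k (zc t 4%nat) in let v := pwpoly k (zc t 5%nat) in
  let u_t := pwpoly k (dcoef zc t 0%nat) in let phi_t := pwpoly k (dcoef zc t 2%nat) in
  let v_t := pwpoly k (dcoef zc t 5%nat) in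
  nu * cell_ip xs v v_t j
  - cell_ip xs (fun n x => Derive V (u n x)) u_t j
  = sigma / 2 * (dg_form N xs rho u_t j + dg_form N xs u_t rho j)
  + nu * (dg_form N xs v u_t j + dg_form N xs u_t v j)
  - (dg_form N xs w phi_t j + dg_form N xs phi_t w j).
Proof.
  intros Ht Hj u w rho v u_t phi_t v_t.
  pose proof (scheme_eq_slot t 0 (dcoef zc t 0%nat) j Ht ltac:(lia) Hj) as E0.
  pose proof (scheme_eq_slot t 1 (dcoef zc t 1%nat) j Ht ltac:(lia) Hj) as E1.
  pose proof (scheme_eq_slot t 2 (dcoef zc t 2%nat) j Ht ltac:(lia) Hj) as E2.
  pose proof (dg_relation_dt 1 2 0 (zc t 3%nat) j t Ht Hj ltac:(lia) ltac:(lia)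
    (fun s Hs => f_equal (Rmult 1) (scheme_u_dx_phi s _ j Hs Hj))) as E3.
  pose proof (dg_relation_dt (sigma / 2) 0 1 (zc t 4%nat) j t Ht Hj ltac:(lia) ltac:(lia)
    (fun s Hs => scheme_theta_dx_u s _ j Hs Hj)) as E4.
  pose proof (dg_relation_dt nu 0 5 (zc t 5%nat) j t Ht Hj ltac:(lia) ltac:(lia)
    (fun s Hs => scheme_v_dx_u s _ j Hs Hj)) as E5.
  unfold sum6 in E0, E1, E2. cbn [Mmat Kmat Smat Nat.eqb] in E0, E1, E2.
  rewrite (cell_ip_comm xs (pwpoly k (dcoef zc t 0%nat)) (pwpoly k (dcoef zc t 1%nat))) in E1.
  rewrite (cell_ip_comm xs (pwpoly k (dcoef zc t 0%nat)) (pwpoly k (dcoef zc t 2%nat))) in E2.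
  rewrite (cell_ip_comm xs (pwpoly k (dcoef zc t 0%nat)) (pwpoly k (zc t 3%nat))) in E3.
  rewrite (cell_ip_comm xs (pwpoly k (dcoef zc t 1%nat)) (pwpoly k (zc t 4%nat))) in E4.
  rewrite (cell_ip_comm xs (pwpoly k (dcoef zc t 5%nat)) (pwpoly k (zc t 5%nat))) in E5.
  subst u w rho v u_t phi_t v_t. lra.
Qed.

Lemma continuity_2d_pt_component i j x t : (i < 6)%nat -> (j < N)%nat -> T0 < t < T1 ->
  continuity_2d_pt (fun s y => pwpoly k (zc s i) j y) t x.
Proof.
  intros Hi Hj Ht. apply continuity_2d_pt_peval; intros m Hm.
  apply continuity_pt_filterlim, ex_derive_continuous_R, Hzc; auto.
Qed.

Lemma continuity_2d_pt_dcomponent i j x t : (i < 6)%nat -> (j < N)%nat -> T0 < t < T1 ->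
  continuity_2d_pt (fun s y => pwpoly k (dcoef zc s i) j y) t x.
Proof.
  intros Hi Hj Ht. apply (continuity_2d_pt_peval k (fun s => dcoef zc s i j)); intros m Hm.
  apply continuity_pt_filterlim, Hzc; auto.
Qed.

Lemma is_derive_energy_density s j x : T0 < s < T1 -> (j < N)%nat ->
  is_derive (fun r => - V (peval k (zc r 0%nat j) x) + nu / 2 * peval k (zc r 5%nat j) x ^ 2) s
    (nu * (pwpoly k (zc s 5%nat) j x * pwpoly k (dcoef zc s 5%nat) j x)
     - Derive V (pwpoly k (zc s 0%nat) j x) * pwpoly k (dcoef zc s 0%nat) j x).
Proof.
  intros Hs Hj.
  assert (Du : forall i, (i < 6)%nat ->
    is_derive (fun r => pwpoly k (zc r i) j x) s (pwpoly k (dcoef zc s i) j x))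
    by (intros; apply is_derive_peval_coef; intros; apply is_derive_dcoef; auto).
  replace (nu * _ - _)
    with (- (Derive V (pwpoly k (zc s 0%nat) j x) * pwpoly k (dcoef zc s 0%nat) j x)
    + nu / 2 * (INR 2 * pwpoly k (dcoef zc s 5%nat) j x * pwpoly k (zc s 5%nat) j x ^ pred 2))
    by (simpl; field).
  apply is_derive_plus_R.
  - apply is_derive_opp_R, (is_derive_comp_R V (fun r => pwpoly k (zc r 0%nat) j x));
      [apply Derive_correct, HV | apply Du; lia].
  - apply is_derive_scal, (is_derive_pow (fun r => pwpoly k (zc r 5%nat) j x)), Du; lia.
Qed.

Lemma continuity_2d_pt_energy_rate j x t : T0 < t < T1 -> (j < N)%nat ->
  continuity_2d_pt (fun s y => nu * (pwpoly k (zc s 5%nat) j y * pwpoly k (dcoef zc s 5%nat) j y)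
    - Derive V (pwpoly k (zc s 0%nat) j y) * pwpoly k (dcoef zc s 0%nat) j y) t x.
Proof.
  intros Ht Hj. apply continuity_2d_pt_minus.
  - apply (continuity_2d_pt_mult (fun _ _ => nu)
      (fun s y => pwpoly k (zc s 5%nat) j y * pwpoly k (dcoef zc s 5%nat) j y));
      [apply continuity_2d_pt_const | apply continuity_2d_pt_mult].
    + apply continuity_2d_pt_component; auto.
    + apply continuity_2d_pt_dcomponent; auto.
  - apply (continuity_2d_pt_mult (fun s y => Derive V (pwpoly k (zc s 0%nat) j y))
      (fun s y => pwpoly k (dcoef zc s 0%nat) j y)).
    + apply continuity_1d_2d_pt_comp; [apply continuity_pt_filterlim, HV' |].
      apply continuity_2d_pt_component; auto; lia.
    + apply continuity_2d_pt_dcomponent; auto; lia.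
Qed.

Lemma is_derive_energy_cell t j : T0 < t < T1 -> (j < N)%nat ->
  is_derive (fun s => RInt (fun x => - V (peval k (zc s 0%nat j) x)
                                    + nu / 2 * peval k (zc s 5%nat j) x ^ 2) (xs j) (xs (S j))) t
    (nu * cell_ip xs (pwpoly k (zc t 5%nat)) (pwpoly k (dcoef zc t 5%nat)) j
     - cell_ip xs (fun n x => Derive V (pwpoly k (zc t 0%nat) n x))
         (pwpoly k (dcoef zc t 0%nat)) j).
Proof.
  intros Ht Hj.
  set (g s x := nu * (pwpoly k (zc s 5%nat) j x * pwpoly k (dcoef zc s 5%nat) j x)
                - Derive V (pwpoly k (zc s 0%nat) j x) * pwpoly k (dcoef zc s 0%nat) j x).
  replace (nu * _ - _) with (RInt (g t) (xs j) (xs (S j))).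
  2: { unfold g, cell_ip. rewrite RInt_minus_cont, RInt_scal_cont; [reflexivity | ..];
       intros; repeat apply continuous_mult_R;
         try apply continuous_const; try apply continuous_peval.
       apply (continuous_comp (pwpoly k (zc t 0%nat) j)); [apply continuous_peval | apply HV']. }
  apply (is_derive_RInt_param_cont _ g _ _ T0 T1 t Ht).
  - intros s x Hs. now apply is_derive_energy_density.
  - intros x. now apply continuity_2d_pt_energy_rate.
  - intros s x.
    apply (continuous_plus (fun y => - V (peval k (zc s 0%nat j) y))
                           (fun y => nu / 2 * peval k (zc s 5%nat j) y ^ 2)).
    + apply (continuous_opp (fun y => V (peval k (zc s 0%nat j) y))).
      apply (continuous_comp (peval k (zc s 0%nat j))); [apply continuous_peval |].
      apply ex_derive_continuous_R, HV.
    + apply continuous_mult_R; [apply continuous_const |].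
      apply (continuous_comp (peval k (zc s 5%nat j)) (fun z => z ^ 2));
        [apply continuous_peval | apply ex_derive_continuous_R; auto_derive; auto].
Qed.

Lemma sum_energy_rate_eq0 t : T0 < t < T1 ->
  sum_f_R0 (fun j => nu * cell_ip xs (pwpoly k (zc t 5%nat)) (pwpoly k (dcoef zc t 5%nat)) j
    - cell_ip xs (fun n x => Derive V (pwpoly k (zc t 0%nat) n x)) (pwpoly k (dcoef zc t 0%nat)) j)
    (N - 1) = 0.
Proof.
  intros Ht.
  set (rho := pwpoly k (zc t 4%nat)). set (v := pwpoly k (zc t 5%nat)).
  set (w := pwpoly k (zc t 3%nat)).
  set (u_t := pwpoly k (dcoef zc t 0%nat)). set (phi_t := pwpoly k (dcoef zc t 2%nat)).
  rewrite (sum_eq _ (fun j => (dg_form N xs rho u_t j + dg_form N xs u_t rho j) * (sigma / 2)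
                             + (dg_form N xs v u_t j + dg_form N xs u_t v j) * nu
                             - (dg_form N xs w phi_t j + dg_form N xs phi_t w j))).
  - rewrite minus_sum, plus_sum, <- !scal_sum, !sum_dg_form_skew
      by (exact HN || apply C1_pieces_pwpoly).
    ring.
  - intros j Hj. pose proof (energy_rate_cell t j Ht ltac:(lia)) as E. cbv zeta in E.
    unfold rho, v, w, u_t, phi_t. rewrite E. ring.
Qed.

Lemma is_derive_energy_zero t : T0 < t < T1 -> is_derive (energy k N xs nu V zc) t 0.
Proof.
  intros Ht. rewrite <- (sum_energy_rate_eq0 t Ht).
  apply (is_derive_sum_f_R0 (fun j s => RInt (fun x => - V (peval k (zc s 0%nat j) x)
                                    + nu / 2 * peval k (zc s 5%nat j) x ^ 2) (xs j) (xs (S j)))).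
  intros j Hj. apply is_derive_energy_cell; [exact Ht | lia].
Qed.

End Conservation.

Theorem proposition4p6
  (sigma nu : R) (V : R -> R) (k N : nat) (xs : nat -> R)
  (T0 T1 : R) (zc : R -> coefs) :
  (forall n x, ex_derive_n V n x) ->
  (0 < N)%nat ->
  (forall j, (j < N)%nat -> xs j < xs (S j)) ->
  (* z_h is C^1 in t on (T0, T1) with values in (V_h)^6 *)
  (forall i j m, (i < 6)%nat -> (j < N)%nat -> (m <= k)%nat ->
     forall t, T0 < t < T1 ->
       ex_derive (fun s => zc s i j m) t /\
       continuous (Derive (fun s => zc s i j m)) t) ->
  (* the DG scheme holds for every cell and every test function *)
  (forall t, T0 < t < T1 ->
     forall j, (j < N)%nat -> forall phi : coefs,
       scheme_eq k N xs sigma nu V zc t phi j) ->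
  forall t1 t2, T0 < t1 < T1 -> T0 < t2 < T1 ->
    energy k N xs nu V zc t1 = energy k N xs nu V zc t2.
Proof.
  intros HVn HN _ Hzc Hscheme t1 t2 Ht1 Ht2.
  apply (eq_of_is_derive_zero _ T0 T1); auto.
  apply (is_derive_energy_zero sigma nu V k N xs T0 T1 zc); auto.
  - exact (HVn 1%nat).
  - intros y. apply ex_derive_continuous_R, (HVn 2%nat).
Qed.
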